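(* Let $X$ have a pdf $f$ satisfying Conditions (A) and (B) below. Suppose $X$ is quantized by the uniform quantizer $Q_{\mathrm{uni}}^\delta$ and the cells are assigned the real-valued Shannon code. Let $L$ be the resulting random codeword length. Then $$\lim_{\delta\to0}\frac{E[L^2]}{(E[L])^2}=1.$$
   Context: Let $X$ be a real random variable with pdf $f$. Condition (A): $f$ is continuous and differentiable, and its support is a bounded interval $I$. Condition (B): $\int_I f\log_2^2 f\,dx$ and $-\int_I f\log_2 f\,dx$ exist and are finite. The uniform quantizer $Q_{\mathrm{uni}}^\delta$ partitions $I$ into consecutive cells of length $\delta$. Let $p_i$ be the probability that $X$ falls in cell $i$. The real-valued Shannon code assigns length $l_i=-\log_2 p_i$ to cell $i$, and $L=l_i$ when $X$ is in cell $i$. *)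

From HB Require Import structures.
From mathcomp Require Import all_boot all_order all_algebra.
From mathcomp Require Import all_classical all_reals all_analysis.
Set Implicit Arguments. Unset Strict Implicit. Unset Printing Implicit Defensive.
Import Order.TTheory GRing.Theory Num.Theory.
Import numFieldNormedType.Exports.
Local Open Scope classical_set_scope.
Local Open Scope ring_scope.

Section Defs.
Variable R : realType.

Definition log2 (x : R) : R := ln x / ln 2.

Definition xlog2k (k : nat) (y : R) : R :=
  if y == 0 then 0 else y * (log2 y) ^+ k.

Definition is_pdf (f : R -> R) : Prop :=
  (forall x, 0 <= f x) /\ measurable_fun setT f /\
  (lebesgue_measure).-integrable setT (fun x => (f x)%:E) /\
  \int[lebesgue_measure]_(x in setT) f x = 1.

Definition pdf_support (f : R -> R) : set R := closure [set x | f x != 0].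

(* Uniform quantizer of I = [a,b] with step delta: cells
   C_k = [a + k delta, a + (k+1) delta) /\ [a,b], k = 0, ..., ncells - 1,
   where ncells = floor ((b - a)/delta) + 1; they partition [a,b]. *)
Definition ncells (a b delta : R) : nat := (Num.truncn ((b - a) / delta)).+1.

Definition cell (a b delta : R) (k : nat) : set R :=
  `[a + k%:R * delta, a + k.+1%:R * delta[%classic `&` `[a, b]%classic.

Definition pcell (f : R -> R) (a b delta : R) (k : nat) : R :=
  \int[lebesgue_measure]_(x in cell a b delta k) f x.

(* E[L^m] for the real-valued Shannon code l_k = - log2 p_k,
   i.e. sum_k p_k (- log2 p_k)^m  (cells with p_k = 0 contribute 0) *)
Definition momentL (m : nat) (f : R -> R) (a b delta : R) : R :=
  \sum_(k < ncells a b delta)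
     (if pcell f a b delta k == 0 then 0
      else pcell f a b delta k * (- log2 (pcell f a b delta k)) ^+ m).

End Defs.

From HB Require Import structures.
From mathcomp Require Import all_boot all_order all_algebra.
From mathcomp Require Import all_classical all_reals all_analysis.
From mathcomp Require Import ring lra.
Import Order.TTheory GRing.Theory Num.Theory.
Import numFieldNormedType.Exports.
Local Open Scope classical_set_scope.
Local Open Scope ring_scope.

(* Let M > 0 bound f (continuous on [a, b], zero outside). Every cell has probability
   p_k <= M δ, so E[L] >= -log2 (M δ) -> +oo as δ -> 0+.  On the other hand
   Var L <= E[(L + log2 δ)^2] = Σ_k δ y_k log2^2 y_k with y_k = p_k / δ in [0, M]; since
   y log2^2 y is bounded on (0, M] and there are about (b - a) / δ cells, Var L stays
   bounded.  Hence E[L^2] / E[L]^2 = 1 + Var L / E[L]^2 -> 1. *)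

Section Log2.
Context {R : realType}.

Lemma ln2_gt0 : 0 < ln (2 : R).
Proof. by apply: ln_gt0; rewrite ltr1n. Qed.

Lemma ler_log2 (x y : R) : 0 < x -> x <= y -> log2 x <= log2 y.
Proof.
move=> x0 xy; rewrite /log2 ler_pM2r ?invr_gt0 ?ln2_gt0 //.
by rewrite ler_ln ?posrE // (lt_le_trans x0).
Qed.

(* With s = sqrt y: ln s < s and -ln s < 1/s give -1 < s ln s < y. *)
Lemma mul_ln_sqr_le (y : R) : 0 < y -> y * (ln y) ^+ 2 <= 4 * (y + 1) ^+ 2.
Proof.
move=> y0; set s := Num.sqrt y.
have s0 : 0 < s by rewrite sqrtr_gt0.
have ys : y = s ^+ 2 by rewrite sqr_sqrtr // ltW.
have ln_lt : ln s < s := ln_sublinear s0.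
have lnV_lt : - ln s < s^-1.
  by rewrite -lnV ?posrE //; apply: ln_sublinear; rewrite invr_gt0.
have lb : - 1 < s * ln s.
  have : s * (- ln s) < s * s^-1 by rewrite ltr_pM2l.
  by rewrite mulfV ?gt_eqF // mulrN; lra.
have ub : s * ln s < s ^+ 2 by rewrite expr2 ltr_pM2l.
have -> : y * (ln y) ^+ 2 = 4 * (s * ln s) ^+ 2.
  by rewrite [X in ln X]ys lnXn // [X in X * _]ys; ring.
rewrite -ys in ub; rewrite ler_pM2l ?ltr0n //; nra.
Qed.

Definition xlog2_sqr_ub (M : R) : R := 4 * (M + 1) ^+ 2 / ln 2 ^+ 2.

Lemma xlog2_sqr_ub_ge0 (M : R) : 0 <= xlog2_sqr_ub M.
Proof. by rewrite mulr_ge0 ?invr_ge0 ?sqr_ge0 // mulr_ge0 // sqr_ge0. Qed.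

Lemma xlog2_sqr_le (y M : R) : 0 < y -> y <= M -> y * log2 y ^+ 2 <= xlog2_sqr_ub M.
Proof.
move=> y0 yM; rewrite /log2 expr_div_n mulrA ler_pM2r ?invr_gt0 ?exprn_gt0 ?ln2_gt0 //.
apply: le_trans (mul_ln_sqr_le y y0) _.
by rewrite ler_pM2l ?ltr0n // ler_sqr ?nnegrE; lra.
Qed.

Lemma Nlog2_mul_cvgy (M : R) : 0 < M -> - log2 (M * d) @[d --> 0^'+] --> +oo.
Proof.
move=> M0; apply/cvgryPge => A.
near=> d.
have d0 : 0 < d by near: d; exact: nbhs_right_gt.
have lnd : ln d <= - (A * ln 2) - ln M.
  by near: d; exact: (cvgrNy_le (@lnNy R)).
rewrite /log2 -mulNr ler_pdivlMr ?ln2_gt0 // lnM ?posrE //; lra.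
Unshelve. all: by end_near.
Qed.

End Log2.

Section WeightedSums.
Context {R : realDomainType} {N : nat} (p : 'I_N -> R).
Hypothesis p_sum1 : \sum_k p k = 1.

Lemma sum_sqr_dev (h : 'I_N -> R) (c : R) :
  \sum_k p k * (h k - c) ^+ 2 =
  (\sum_k p k * h k ^+ 2 - (\sum_k p k * h k) ^+ 2) + (\sum_k p k * h k - c) ^+ 2.
Proof.
have -> : \sum_k p k * (h k - c) ^+ 2 =
    \sum_k (p k * h k ^+ 2 - 2 * c * (p k * h k) + c ^+ 2 * p k).
  by apply: eq_bigr => k _; ring.
by rewrite !big_split /= sumrN -!mulr_sumr p_sum1; ring.
Qed.

Hypothesis p_ge0 : forall k, 0 <= p k.

Lemma sqr_mean_le (h : 'I_N -> R) :
  (\sum_k p k * h k) ^+ 2 <= \sum_k p k * h k ^+ 2.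
Proof.
rewrite -subr_ge0.
have := sum_sqr_dev h (\sum_k p k * h k); rewrite subrr expr0n addr0 => <-.
by apply: sumr_ge0 => k _; rewrite mulr_ge0 ?sqr_ge0.
Qed.

Lemma variance_le_sum_sqr_dev (h : 'I_N -> R) (c : R) :
  \sum_k p k * h k ^+ 2 - (\sum_k p k * h k) ^+ 2 <= \sum_k p k * (h k - c) ^+ 2.
Proof. by rewrite sum_sqr_dev lerDl sqr_ge0. Qed.

End WeightedSums.

Definition shannon_moment {R : realType} {N : nat} (p : 'I_N -> R) (n : nat) : R :=
  \sum_k p k * (- log2 (p k)) ^+ n.

Section ShannonMoments.
Context {R : realType} {N : nat} {p : 'I_N -> R}.
Hypotheses (p_ge0 : forall k, 0 <= p k) (p_sum1 : \sum_k p k = 1).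

Lemma shannon_moment1_ge (q : R) :
  0 < q -> (forall k, p k <= q) -> - log2 q <= shannon_moment p 1.
Proof.
move=> q0 pq; rewrite /shannon_moment -[leLHS]mul1r -p_sum1 mulr_suml.
apply: ler_sum => k _; have [->|pk] := eqVneq (p k) 0; first by rewrite !mul0r.
by rewrite expr1 ler_wpM2l // lerN2 ler_log2 // lt_neqAle eq_sym pk p_ge0.
Qed.

Lemma shannon_moment_sqr_le : shannon_moment p 1 ^+ 2 <= shannon_moment p 2.
Proof.
rewrite /shannon_moment; under eq_bigr do rewrite expr1.
exact: sqr_mean_le.
Qed.

(* The k-th term is d y log2^2 y with y = p k / d in (0, M]. *)
Lemma sum_sqr_log2_ratio_le {d M : R} : 0 < d -> (forall k, p k <= M * d) ->
  \sum_k p k * (- log2 (p k) - - log2 d) ^+ 2 <= N%:R * d * xlog2_sqr_ub M.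
Proof.
move=> d0 pM.
rewrite (_ : N%:R * d * _ = \sum_(k < N) d * xlog2_sqr_ub M); last first.
  by rewrite sumr_const card_ord -mulrA mulr_natl.
apply: ler_sum => k _.
have [->|pk] := eqVneq (p k) 0.
  by rewrite mul0r mulr_ge0 ?xlog2_sqr_ub_ge0 ?ltW.
have pk0 : 0 < p k by rewrite lt_neqAle eq_sym pk p_ge0.
set y := p k / d.
have -> : p k * (- log2 (p k) - - log2 d) ^+ 2 = d * (y * log2 y ^+ 2).
  rewrite /y /log2 lnM ?posrE ?invr_gt0 // lnV ?posrE //.
  by field; rewrite (gt_eqF ln2_gt0) (gt_eqF d0).
rewrite ler_pM2l // xlog2_sqr_le ?divr_gt0 //.
by rewrite /y ler_pdivrMr.
Qed.

Lemma shannon_variance_le {d M : R} : 0 < d -> (forall k, p k <= M * d) ->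
  shannon_moment p 2 - shannon_moment p 1 ^+ 2 <= N%:R * d * xlog2_sqr_ub M.
Proof.
move=> d0 pM; apply: le_trans (sum_sqr_log2_ratio_le d0 pM).
rewrite /shannon_moment; under [in X in _ - X ^+ 2]eq_bigr do rewrite expr1.
exact: variance_le_sum_sqr_dev.
Qed.

End ShannonMoments.

Section Cells.
Context {R : realType}.
Implicit Types (f : R -> R) (a b d M x : R).

Lemma measurable_cell a b d k : measurable (cell a b d k).
Proof. by apply: measurableI; apply: measurable_itv. Qed.

Lemma lebesgue_measure_cell_le a b d k :
  0 < d -> (lebesgue_measure (cell a b d k) <= d%:E)%E.
Proof.
move=> d0; apply: (@le_trans _ _ (lebesgue_measure
    [set` `[a + k%:R * d, a + k.+1%:R * d[])).
  apply: le_measure; rewrite ?inE; [exact: measurable_cell|exact: measurable_itv|].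
  exact: subIsetl.
rewrite lebesgue_measure_itv /= lte_fin ifT; last by rewrite ltrD2l ltr_pM2r // ltr_nat.
by rewrite -EFinD lee_fin mulrSr; lra.
Qed.

Lemma truncn_cell {a b d} {k : nat} {x} :
  0 < d -> cell a b d k x -> Num.truncn ((x - a) / d) = k.
Proof.
move=> d0 [/= + _]; rewrite in_itv /= => /andP[xl xr].
by apply: truncn_def; rewrite ler_pdivlMr // ltr_pdivrMr //; apply/andP; split; lra.
Qed.

Lemma bigcup_cell a b d : 0 < d ->
  \big[setU/set0]_(k <- iota 0 (ncells a b d)) cell a b d k = `[a, b]%classic.
Proof.
move=> d0; rewrite -bigcup_seq; apply/seteqP; split; first by move=> x [k _ []].
move=> x xab; have /andP[ax xb] : a <= x <= b by move: xab; rewrite /= in_itv.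
have xa0 : 0 <= (x - a) / d by rewrite divr_ge0 //; lra.
exists (Num.truncn ((x - a) / d)).
  change (Num.truncn ((x - a) / d) \in iota 0 (ncells a b d)).
  rewrite mem_iota add0n /ncells ltnS; apply: le_truncn.
  by rewrite ler_pM2r ?invr_gt0 //; lra.
split => //=; have /andP[] := truncn_itv xa0.
by rewrite ler_pdivlMr // ltr_pdivrMr // in_itv /= => ? ?; apply/andP; split; lra.
Qed.

Lemma trivIset_cell a b d (s : seq nat) : 0 < d -> trivIset [set` s] (cell a b d).
Proof.
move=> d0; apply/trivIsetP => i j _ _ ij; apply/seteqP; split => // x [ci cj].
by move: ij; rewrite -(truncn_cell d0 ci) -(truncn_cell d0 cj) eqxx.
Qed.

Lemma ncells_mul_le a b d : 0 < d -> a <= b -> (ncells a b d)%:R * d <= b - a + d.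
Proof.
move=> d0 ab; rewrite /ncells -addn1 natrD mulrDl mul1r lerD2r.
have ba : 0 <= (b - a) / d by rewrite divr_ge0 ?subr_ge0 // ltW.
have := truncn_le ((b - a) / d); rewrite ba => /(ler_wpM2r (ltW d0)).
by rewrite -mulrA mulVf ?gt_eqF // mulr1.
Qed.

Section Density.
Variable f : R -> R.
Hypotheses (f_ge0 : forall x, 0 <= f x) (mf : measurable_fun setT f).

Lemma pcell_ge0 a b d k : 0 <= pcell f a b d k.
Proof. by apply: fine_ge0; apply: integral_ge0 => x _; rewrite lee_fin. Qed.

Lemma pcell_le a b d k M : 0 < d -> 0 <= M -> (forall x, f x <= M) ->
  pcell f a b d k <= M * d.
Proof.
move=> d0 M0 fM; have mc := measurable_cell a b d k.
have int_le : (\int[lebesgue_measure]_(x in cell a b d k) (f x)%:E <= (M * d)%:E)%E.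
  apply: (@le_trans _ _ (\int[lebesgue_measure]_(x in cell a b d k) (cst M%:E x))%E).
    apply: ge0_le_integral => //; first by move=> x _; rewrite lee_fin.
      by apply/measurable_realfun.measurable_EFinP; exact: measurable_funS mf.
    by move=> x _; rewrite lee_fin.
  rewrite integral_cst // EFinM; apply: lee_wpmul2l; first by rewrite lee_fin.
  exact: lebesgue_measure_cell_le.
have int_ge0 : (0 <= \int[lebesgue_measure]_(x in cell a b d k) (f x)%:E)%E.
  by apply: integral_ge0 => x _; rewrite lee_fin.
rewrite /pcell /Rintegral -lee_fin fineK // ge0_fin_numE //.
exact: le_lt_trans int_le (ltry _).
Qed.

Lemma sum_pcell a b d : 0 < d ->
  lebesgue_measure.-integrable setT (fun x => (f x)%:E) ->
  \int[lebesgue_measure]_(x in setT) f x = 1 ->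
  (forall x, ~ `[a, b]%classic x -> f x = 0) ->
  \sum_(k < ncells a b d) pcell f a b d k = 1.
Proof.
move=> d0 intf f1 f_out.
have int_ab : (\int[lebesgue_measure]_(x in `[a, b]%classic) (f x)%:E = 1%:E)%E.
  rewrite -f1 /Rintegral fineK; last exact: integrable_fin_num.
  rewrite [LHS]integral_mkcond; apply: eq_integral => x _; rewrite patchE.
  by case: ifPn => // /negP; rewrite inE => /f_out ->.
have int_sum : (\int[lebesgue_measure]_(x in `[a, b]%classic) (f x)%:E =
    \sum_(k <- iota 0 (ncells a b d)) \int[lebesgue_measure]_(x in cell a b d k) (f x)%:E)%E.
  rewrite -(bigcup_cell a b d d0); apply: ge0_integral_bigsetU.
  - exact: measurable_cell.
  - exact: iota_uniq.
  - exact: trivIset_cell.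
  - by apply/measurable_realfun.measurable_EFinP; exact: measurable_funS mf.
  - by move=> x _; rewrite lee_fin.
have int_cell k : (\int[lebesgue_measure]_(x in cell a b d k) (f x)%:E)%E =
    (pcell f a b d k)%:E.
  have mc := measurable_cell a b d k.
  by rewrite /pcell /Rintegral fineK // integrable_fin_num // (integrableS _ _ _ intf).
rewrite -(big_mkord xpredT (pcell f a b d)) /index_iota subn0.
by move: int_sum; rewrite int_ab (eq_bigr _ (fun k _ => int_cell k)) sumEFin => -[<-].
Qed.

End Density.

Lemma momentLE m f a b d :
  momentL m f a b d = shannon_moment (fun k : 'I_(ncells a b d) => pcell f a b d k) m.
Proof. by apply: eq_bigr => k _; case: eqP => [->|]; rewrite ?mul0r. Qed.

End Cells.

Lemma bounded_variance_ratio_cvg1 {R : realFieldType} {T : Type} (F : set_system T) {FF : Filter F}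
    (m1 m2 : T -> R) (V : R) :
  m1 @ F --> +oo -> (\forall t \near F, 0 <= m2 t - m1 t ^+ 2 <= V) ->
  m2 t / m1 t ^+ 2 @[t --> F] --> (1 : R).
Proof.
move=> m1y var_le; apply/cvgrPdist_lt => e e0.
set A := V / e + 1.
near=> t.
have /andP[var0 varV] : 0 <= m2 t - m1 t ^+ 2 <= V by near: t; exact: var_le.
have Am1 : A < m1 t by near: t; exact: cvgry_gt.
have V0 : 0 <= V by lra.
have A1 : 1 <= A by rewrite lerDr divr_ge0 // ltW.
have VeA : V < e * A by rewrite mulrDr mulrCA mulfV ?gt_eqF // mulr1; lra.
have m1sq : 0 < m1 t ^+ 2 by rewrite exprn_gt0 //; lra.
rewrite distrC ger0_norm; last by rewrite subr_ge0 ler_pdivlMr // mul1r; lra.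
rewrite -[X in _ - X](@divff _ (m1 t ^+ 2)) ?gt_eqF // -mulrBl ltr_pdivrMr //.
have : e * A <= e * m1 t ^+ 2 by rewrite ler_pM2l // expr2; nra.
lra.
Unshelve. all: by end_near.
Qed.

Section BoundedDensity.
Context {R : realType} (f : R -> R).

Lemma pdf_support_compl x : ~ pdf_support f x -> f x = 0.
Proof.
by move=> fx; apply/eqP/negPn/negP => fx0; apply: fx; exact: subset_closure.
Qed.

Lemma continuous_pdf_ub (a b : R) : a <= b -> (forall x, 0 <= f x) ->
  (forall x, ~ `[a, b]%classic x -> f x = 0) -> {within `[a, b], continuous f} ->
  exists2 M, 0 < M & forall x, f x <= M.
Proof.
move=> ab f_ge0 f_out fcont; have [c _ fc] := EVT_max ab fcont.
exists (f c + 1); first by rewrite ltr_wpDl.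
move=> x; have [xab|xab] := boolP (x \in `[a, b]); first by rewrite ler_wpDr ?fc.
by rewrite f_out ?addr_ge0 //; apply/negP.
Qed.

End BoundedDensity.

Theorem proposition1 (R : realType) (f : R -> R) (a b : R) :
  is_pdf f ->
  (* Condition (A) *)
  a < b ->
  pdf_support f = `[a, b]%classic ->
  {within `[a, b], continuous f} ->
  (forall x, x \in `]a, b[ -> derivable f x 1) ->
  (* Condition (B) *)
  (lebesgue_measure).-integrable `[a, b]%classic (fun x => (xlog2k 2 (f x))%:E) ->
  (lebesgue_measure).-integrable `[a, b]%classic (fun x => (- xlog2k 1 (f x))%:E) ->
  (fun delta : R => momentL 2 f a b delta / (momentL 1 f a b delta) ^+ 2)
    @ 0^'+ --> (1 : R).
Proof.
move=> [f_ge0 [mf [intf f1]]] ab supp fcont _ _ _.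
have f_out x : ~ `[a, b]%classic x -> f x = 0 by rewrite -supp; exact: pdf_support_compl.
have [M M0 fM] := continuous_pdf_ub f a b (ltW ab) f_ge0 f_out fcont.
have cells d : 0 < d -> [/\ forall k, 0 <= pcell f a b d k,
    \sum_(k < ncells a b d) pcell f a b d k = 1 & forall k, pcell f a b d k <= M * d].
  move=> d0; split => [k||k]; first exact: pcell_ge0.
    exact: sum_pcell.
  exact: pcell_le (ltW M0) fM.
apply: (bounded_variance_ratio_cvg1 _ _ _ ((b - a + 1) * xlog2_sqr_ub M)).
  apply: ger_cvgy _ (Nlog2_mul_cvgy M M0); near=> d.
  have /cells[p_ge0 p_sum1 pM] : 0 < d by near: d; exact: nbhs_right_gt.
  by rewrite momentLE; apply: shannon_moment1_ge => //; rewrite mulr_gt0.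
near=> d.
have d0 : 0 < d by near: d; exact: nbhs_right_gt.
have d1 : d < 1 by near: d; exact: (nbhs_right_lt ltr01).
have [p_ge0 p_sum1 pM] := cells d d0.
rewrite !momentLE subr_ge0 shannon_moment_sqr_le //=.
apply: le_trans (shannon_variance_le p_ge0 p_sum1 d0 pM) _.
apply: ler_wpM2r; first exact: xlog2_sqr_ub_ge0.
by have := ncells_mul_le a b d d0 (ltW ab); lra.
Unshelve. all: by end_near.
Qed.
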